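(* Let $U$ be a Hilbert space, $T: U\rightrightarrows U$, $(\hat u,\hat w)\in\operatorname{graph}T$, $N,M\in\mathcal{L}(U;U)$ with $M\ge0$, and $\gamma\in[0,1]$. Then $(N,\gamma M)$-subregularity of $T$ at $(\hat u,\hat w)$ implies $(\gamma M,N,M)$-partial subregularity at the same point. If $T^{-1}(\hat w)=\{\hat u\}$ is a singleton, these two properties are equivalent.
   Context: For $T\in\mathcal{L}(U;U)$: $\|x\|^2_T:=\langle Tx,x\rangle$, $\operatorname{dist}^2_T(z,A):=\inf_{u\in A}\|z-u\|^2_T$ ($\inf\emptyset=+\infty$). For $M,P,N\in\mathcal{L}(U;U)$ with $N\ge0$, $M\ge0$, $M\ge P$, $T$ is $(P,N,M)$-partially subregular at $(\hat u,\hat w)$ if there is a neighbourhood $\mathcal{U}\ni\hat u$ with $\operatorname{dist}^2_N(\hat w,T(u)) + \operatorname{dist}^2_{M-P}(u,T^{-1}(\hat w))\ge\operatorname{dist}^2_M(u,T^{-1}(\hat w))$ for all $u\in\mathcal{U}$. $T$ is $(N,M)$-subregular if it is $(M,N,M)$-partially subregular. *)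

From HB Require Import structures.
From mathcomp Require Import all_boot all_order all_algebra.
From mathcomp Require Import all_classical all_reals all_analysis.
Set Implicit Arguments. Unset Strict Implicit. Unset Printing Implicit Defensive.
Import Order.TTheory GRing.Theory Num.Theory.
Import numFieldNormedType.Exports.
Local Open Scope classical_set_scope.
Local Open Scope ring_scope.

(* A real Hilbert space: a complete normed space U whose norm is induced by a
   symmetric bilinear inner product. *)
Record inner_product (R : realType) (U : completeNormedModType R) := InnerProduct {
  inner :> U -> U -> R;
  inner_sym : forall x y, inner x y = inner y x;
  inner_addl : forall x y z, inner (x + y) z = inner x z + inner y z;
  inner_scalel : forall (a : R) x y, inner (a *: x) y = a * inner x y;
  inner_normE : forall x, inner x x = `|x| ^+ 2 }.

Section Defs.
Context {R : realType} {U : completeNormedModType R} (ip : @inner_product R U).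

Definition sqnorm (T : U -> U) (x : U) : R := ip (T x) x.

(* dist_T^2(z, A) := inf_{u in A} ||z - u||_T^2, with inf of the empty set = +oo *)
Definition dist2 (T : U -> U) (z : U) (A : set U) : \bar R :=
  ereal_inf [set (sqnorm T (z - u))%:E | u in A].

Definition psd (T : U -> U) : Prop := forall x, 0 <= sqnorm T x.

Definition loewner_le (P M : U -> U) : Prop := forall x, sqnorm P x <= sqnorm M x.

Definition inv_img (T : U -> set U) (w : U) : set U := [set u | T u w].

Definition partially_subregular (P N M : U -> U) (T : U -> set U) (uh wh : U) : Prop :=
  [/\ psd N, psd M, loewner_le P M &
   exists V : set U, nbhs uh V /\
     forall u, V u ->
       (dist2 N wh (T u) + dist2 (fun x => (M x - P x)%R) u (inv_img T wh)
         >= dist2 M u (inv_img T wh))%E].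

Definition subregular (N M : U -> U) (T : U -> set U) (uh wh : U) : Prop :=
  partially_subregular M N M T uh wh.

End Defs.

From HB Require Import structures.
From mathcomp Require Import all_boot all_order all_algebra.
From mathcomp Require Import all_classical all_reals all_analysis.
Import Order.TTheory GRing.Theory Num.Theory.
Import numFieldNormedType.Exports.
Local Open Scope classical_set_scope.
Local Open Scope ring_scope.

(* Splitting [M = gamma M + (1 - gamma) M], the subregularity inequality for
   [(N, gamma M)] controls the [gamma]-part of [dist_M^2], while
   [dist_{(1 - gamma) M}^2 >= (1 - gamma) dist_M^2] supplies the rest; the
   term [dist_{gamma M - gamma M}^2] vanishes because [uh] lies in [T^-1(wh)].
   When [T^-1(wh)] is the singleton [{uh}], all distances are the explicit
   numbers [c ||u - uh||_M^2], and the two inequalities differ by the same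
   term [(1 - gamma) ||u - uh||_M^2] on both sides. *)

Section SquaredDistance.
Context {R : realType} {U : completeNormedModType R} {ip : @inner_product R U}.

Lemma inner0l y : ip 0 y = 0.
Proof. by rewrite -(scale0r (0 : U)) inner_scalel mul0r. Qed.

Lemma sqnorm_scale (c : R) (M : U -> U) x :
  sqnorm ip (fun y => c *: M y) x = c * sqnorm ip M x.
Proof. exact: inner_scalel. Qed.

Lemma sqnorm_subrr (P : U -> U) x : sqnorm ip (fun y => P y - P y) x = 0.
Proof. by rewrite /sqnorm subrr inner0l. Qed.

Lemma subr_scaler_fun (c : R) (M : U -> U) :
  (fun x => M x - c *: M x) = (fun x => (1 - c) *: M x).
Proof. by apply: funext => x; rewrite scalerBl scale1r. Qed.

Lemma dist2_le (M : U -> U) u (S : set U) a :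
  S a -> (dist2 ip M u S <= (sqnorm ip M (u - a))%:E)%E.
Proof.
by move=> Sa; apply: ge_ereal_inf; exists (sqnorm ip M (u - a))%:E => //; exists a.
Qed.

Lemma dist2_set1 (M : U -> U) u a : dist2 ip M u [set a] = (sqnorm ip M (u - a))%:E.
Proof. by rewrite /dist2 image_set1 ereal_inf1. Qed.

Lemma dist2_scale_ge (c : R) (M : U -> U) u (S : set U) : 0 <= c ->
  (c%:E * dist2 ip M u S <= dist2 ip (fun y => c *: M y) u S)%E.
Proof.
move=> c0; apply/ereal_infP => _ [s Ss <-].
by rewrite sqnorm_scale EFinM; apply: lee_wpmul2l; rewrite ?lee_fin ?dist2_le.
Qed.

End SquaredDistance.

Section ScaledSubregularity.
Context {R : realType} {U : completeNormedModType R} {ip : @inner_product R U}.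
Context {T : U -> set U} {uh wh : U} {N M : U -> U} {gamma : R}.
Hypotheses (Tuh : T uh wh) (psdM : psd ip M) (gamma_ge0 : 0 <= gamma)
  (gamma_le1 : gamma <= 1).

Let gM x := gamma *: M x.

Lemma psd_scale : psd ip gM.
Proof. by move=> x; rewrite sqnorm_scale mulr_ge0. Qed.

Lemma loewner_le_scale : loewner_le ip gM M.
Proof. by move=> x; rewrite sqnorm_scale ler_piMl. Qed.

Lemma subregular_partially_subregular_scale :
  subregular ip N gM T uh wh -> partially_subregular ip gM N M T uh wh.
Proof.
case=> psdN _ _ [V [nV subreg]]; split=> //; first exact: loewner_le_scale.
exists V; split => // u Vu; set S := inv_img T wh.
have dist0_le0 : (dist2 ip (fun x => (gM x - gM x)%R) u S <= 0)%E.
  by apply: le_trans (dist2_le _ u S uh Tuh) _; rewrite sqnorm_subrr.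
have gamma_part : (gamma%:E * dist2 ip M u S <= dist2 ip N wh (T u))%E.
  apply: le_trans (dist2_scale_ge gamma M u S gamma_ge0) _.
  by apply: le_trans (subreg u Vu) _; rewrite -[leRHS]adde0 leeD2l.
have rest_part : ((1 - gamma)%:E * dist2 ip M u S
    <= dist2 ip (fun x => (M x - gM x)%R) u S)%E.
  by rewrite /gM subr_scaler_fun dist2_scale_ge // subr_ge0.
rewrite -[leLHS]mul1e (_ : 1%E = gamma%:E + (1 - gamma)%:E); last first.
  by rewrite -EFinD addrC subrK.
by rewrite ge0_muleDl ?lee_fin ?subr_ge0 //; apply: leeD.
Qed.

Lemma partially_subregular_scale_subregular : inv_img T wh = [set uh] ->
  partially_subregular ip gM N M T uh wh -> subregular ip N gM T uh wh.
Proof.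
move=> Tinv1 [psdN _ _ [V [nV psubreg]]]; split=> //; first exact: psd_scale.
exists V; split => // u Vu; move: (psubreg u Vu).
rewrite Tinv1 !dist2_set1 sqnorm_subrr adde0 sqnorm_scale.
rewrite /gM subr_scaler_fun sqnorm_scale.
case: (dist2 ip N wh (T u)) => [r| |] //=; last by move=> _; rewrite leey.
by rewrite -EFinD !lee_fin mulrBl mul1r addrCA lerDl subr_ge0.
Qed.

End ScaledSubregularity.

Theorem corollary4p6 (R : realType) (U : completeNormedModType R)
  (ip : @inner_product R U) (T : U -> set U) (uh wh : U)
  (N M : {linear U -> U}) (gamma : R) :
  T uh wh ->
  continuous N -> continuous M ->
  psd ip M ->
  0 <= gamma <= 1 ->
  (subregular ip N (fun x => gamma *: M x) T uh wh ->
     partially_subregular ip (fun x => gamma *: M x) N M T uh wh) /\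
  (inv_img T wh = [set uh] ->
     (subregular ip N (fun x => gamma *: M x) T uh wh <->
      partially_subregular ip (fun x => gamma *: M x) N M T uh wh)).
Proof.
move=> Tuh _ _ psdM /andP[gamma_ge0 gamma_le1].
split=> [|Tinv1]; first exact: subregular_partially_subregular_scale.
split; first exact: subregular_partially_subregular_scale.
exact: partially_subregular_scale_subregular.
Qed.
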